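(* Let $\alpha>-1$ and let $n\ge 0$ be an integer. The matrix $\big((\alpha+1)_{j+k}\big)_{j,k=0}^{n}$ is invertible and \[ \big((\alpha+1)_{j+k}\big)_{j,k=0}^{n}{}^{-1}=\left(\sum_{\ell=0}^{n}\frac{(\alpha+1)_{\ell}\,(-\ell)_{j}\,(-\ell)_{k}}{\ell!\,(\alpha+1)_{j}\,(\alpha+1)_{k}\,j!\,k!}\right)_{j,k=0}^{n}. \]
   Context: For a complex number $z$ and integer $m\ge0$, $(z)_m=z(z+1)\cdots(z+m-1)$ denotes the shifted factorial, with $(z)_0=1$ (so $(-\ell)_j=0$ when $j>\ell$). *)

From HB Require Import structures.
From mathcomp Require Import all_boot all_order all_algebra.
Set Implicit Arguments. Unset Strict Implicit. Unset Printing Implicit Defensive.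
Import Order.TTheory GRing.Theory Num.Theory.
Local Open Scope ring_scope.

Definition poch {R : pzSemiRingType} (z : R) (m : nat) : R :=
  \prod_(i < m) (z + i%:R).

(* With a = alpha + 1, write the candidate inverse as
     G j k = \sum_l (a)_l/l! * u_l j * u_l k,   u_l j = (-l)_j / ((a)_j j!),
   and compute G *m H = 1 directly.  Two facts about Pochhammer symbols drive it:
   (-l)_k / k! = (-1)^k C(l,k) and (a)_(k+m) = (a)_k (a+k)_m.  They turn the
   sum over k into the alternating binomial sum
     A_l f := \sum_(k<=l) (-1)^k C(l,k) f k
   (a signed l-th finite difference) of f k = (a+k)_m, which equals
   (-1)^l m^_l (a+l)_(m-l).  The resulting sum over l is again an alternating
   binomial sum, now of l |-> C(l,j), which is (-1)^m [m = j].
   Both evaluations follow by induction on l from Pascal's recurrence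
   A_(l+1) f = A_l (fun k => f k - f (k+1)). *)

From HB Require Import structures.
From mathcomp Require Import all_boot all_order all_algebra ring.
Set Implicit Arguments. Unset Strict Implicit. Unset Printing Implicit Defensive.
Import Order.TTheory GRing.Theory Num.Theory.
Local Open Scope ring_scope.

Section Pochhammer.
Variable R : comPzRingType.
Implicit Types (z : R) (k l m : nat).

Lemma poch0 z : poch z 0 = 1.
Proof. by rewrite /poch big_ord0. Qed.

Lemma pochS z m : poch z m.+1 = poch z m * (z + m%:R).
Proof. by rewrite /poch big_ord_recr. Qed.

Lemma pochSl z m : poch z m.+1 = z * poch (z + 1) m.
Proof.
rewrite /poch big_ord_recl addr0; congr (_ * _); apply: eq_bigr => i _.
by rewrite lift0 -natr1 addrA addrAC.
Qed.

Lemma pochD z k m : poch z (k + m) = poch z k * poch (z + k%:R) m.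
Proof.
elim: m => [|m IH]; first by rewrite addn0 poch0 mulr1.
by rewrite addnS !pochS IH mulrA natrD addrA.
Qed.

Lemma poch_neg_nat l k :
  poch (- l%:R) k = (-1) ^+ k * 'C(l, k)%:R * k`!%:R :> R.
Proof.
rewrite -mulrA -natrM bin_ffact.
elim: k => [|k IH]; first by rewrite poch0 ffactn0 mulr1.
rewrite pochS IH ffactnSr natrM exprS.
case: (leqP k l) => hk; last by rewrite ffact_small // !(mulr0, mul0r).
by rewrite natrB //; ring.
Qed.

Lemma poch_diff z m :
  poch z m.+1 - poch (z + 1) m.+1 = - (m.+1%:R * poch (z + 1) m).
Proof. by rewrite pochSl pochS -natr1; ring. Qed.

End Pochhammer.
Arguments poch_neg_nat {R} l k.

Lemma poch_gt0 (R : numDomainType) (z : R) m : 0 < z -> 0 < poch z m.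
Proof.
move=> z_gt0; elim: m => [|m IH]; first by rewrite poch0.
by rewrite pochS mulr_gt0 // ltr_wpDr.
Qed.

Section AlternatingBinomialSum.
Variable R : pzRingType.
Implicit Types (f : nat -> R) (j l m N : nat).

Definition altsum l f : R := \sum_(k < l.+1) (-1) ^+ k * 'C(l, k)%:R * f k.

(* Terms with k > l vanish, so any longer range of summation gives the same sum. *)
Lemma altsum_widen N l f : (l < N)%N ->
  \sum_(k < N) (-1) ^+ k * 'C(l, k)%:R * f k = altsum l f.
Proof.
move=> lt_lN; rewrite /altsum.
rewrite (big_ord_widen _ (fun k => (-1) ^+ k * 'C(l, k)%:R * f k) lt_lN).
rewrite [RHS]big_mkcond /=.
by apply: eq_bigr => k _; case: ltnP => // hk; rewrite bin_small // mulr0 mul0r.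
Qed.

Lemma altsum_ext l f g : f =1 g -> altsum l f = altsum l g.
Proof. by move=> efg; apply: eq_bigr => k _; rewrite efg. Qed.

Lemma altsum0 l : altsum l (fun=> 0) = 0.
Proof. by rewrite /altsum big1 // => k _; rewrite mulr0. Qed.

Lemma altsumZ l c f : altsum l (fun k => c * f k) = c * altsum l f.
Proof.
rewrite /altsum mulr_sumr; apply: eq_bigr => k _.
have central : GRing.comm c ((-1) ^+ k * 'C(l, k)%:R).
  by apply: commrM; [apply/commrX/commrN1 | apply: commr_nat].
by rewrite mulrA -central -!mulrA.
Qed.

Lemma signed_binomial_sum_recl N l f :
  \sum_(k < N.+1) (-1) ^+ k * 'C(l, k)%:R * f k =
  f 0%N - \sum_(k < N) (-1) ^+ k * 'C(l, k.+1)%:R * f k.+1.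
Proof.
rewrite big_ord_recl expr0 mul1r bin0 mul1r -sumrN; congr (_ + _).
by apply: eq_bigr => k _; rewrite lift0 exprS mulN1r !mulNr.
Qed.

(* Pascal's rule: A_(l+1) f = A_l (Delta f), with Delta f k = f k - f (k+1). *)
Lemma altsumS l f : altsum l.+1 f = altsum l (fun k => f k - f k.+1).
Proof.
have -> : altsum l (fun k => f k - f k.+1) = altsum l f - altsum l (fun k => f k.+1).
  by rewrite /altsum -sumrB; apply: eq_bigr => k _; rewrite mulrBr.
rewrite -(altsum_widen f (leqW (ltnSn l))) /altsum !signed_binomial_sum_recl.
under eq_bigr => k _ do rewrite binS natrD mulrDr mulrDl.
by rewrite big_split /= opprD addrA.
Qed.

End AlternatingBinomialSum.

Section AlternatingSumEvaluations.
Variable R : comPzRingType.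

Lemma altsum_poch l (x : R) m :
  altsum l (fun k => poch (x + k%:R) m)
  = (-1) ^+ l * (m ^_ l)%:R * poch (x + l%:R) (m - l).
Proof.
elim: l x m => [|l IH] x m.
  by rewrite /altsum big_ord1 /= addr0 ffactn0 subn0 !mul1r.
rewrite altsumS.
case: m => [|m].
  rewrite (altsum_ext l (g := fun=> 0)) => [|k]; last by rewrite !poch0 subrr.
  by rewrite altsum0 ffact0n mulr0 mul0r.
rewrite (altsum_ext l (g := fun k => - m.+1%:R * poch ((x + 1) + k%:R) m)) => [|k];
  last first.
  by rewrite -natr1 addrA poch_diff mulNr addrAC.
rewrite altsumZ IH ffactSS subSS natrM exprS.
have -> : x + 1 + l%:R = x + l.+1%:R by rewrite -natr1 addrAC addrA.
ring.
Qed.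

Lemma altsum_bin m j :
  altsum m (fun l => 'C(l, j)%:R) = (if m == j then (-1) ^+ m else 0) :> R.
Proof.
elim: m j => [|m IH] j.
  by rewrite /altsum big_ord1 /= mul1r mul1r; case: j.
rewrite altsumS.
case: j => [|j].
  by rewrite (altsum_ext m (g := fun=> 0)) ?altsum0 // => k; rewrite !bin0 subrr.
rewrite (altsum_ext m (g := fun k => -1 * 'C(k, j)%:R)) => [|k]; last first.
  by rewrite binS natrD opprD addrA subrr add0r mulN1r.
by rewrite altsumZ IH eqSS; case: (m == j); rewrite ?mulr0 // exprS.
Qed.

End AlternatingSumEvaluations.
Arguments altsum_bin {R} m j.

Section HankelPochhammerInverse.
Variables (F : numFieldType) (a : F).
(* a is not a non-positive integer, so no denominator below vanishes. *)
Hypothesis poch_a_neq0 : forall k, poch a k != 0.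

Lemma fact_neq0 k : k`!%:R != 0 :> F.
Proof. by rewrite pnatr_eq0 -lt0n fact_gt0. Qed.

Definition hankel_poch n : 'M[F]_n.+1 := \matrix_(j, k) poch a (j + k)%N.

Definition hankel_poch_inv n : 'M[F]_n.+1 :=
  \matrix_(j, k) \sum_(l < n.+1)
    (poch a l * poch (- l%:R) j * poch (- l%:R) k) /
    (l`!%:R * poch a j * poch a k * j`!%:R * k`!%:R).

Lemma inv_term_mul_hankel l j k m :
  (poch a l * poch (- l%:R) j * poch (- l%:R) k) /
    (l`!%:R * poch a j * poch a k * j`!%:R * k`!%:R) * poch a (k + m)
  = poch a l * poch (- l%:R) j / (l`!%:R * poch a j * j`!%:R) *
    ((-1) ^+ k * 'C(l, k)%:R * poch (a + k%:R) m).
Proof.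
rewrite (poch_neg_nat l k) pochD; field.
by rewrite !poch_a_neq0 !fact_neq0.
Qed.

Lemma inv_row_coeff l j m :
  poch a l * poch (- l%:R) j / (l`!%:R * poch a j * j`!%:R) *
    ((-1) ^+ l * (m ^_ l)%:R * poch (a + l%:R) (m - l))
  = (-1) ^+ j * poch a m / poch a j * ((-1) ^+ l * 'C(m, l)%:R * 'C(l, j)%:R).
Proof.
have [le_lm | lt_ml] := leqP l m; last first.
  by rewrite ffact_small // bin_small // !(mulr0, mul0r).
have -> : poch a m = poch a l * poch (a + l%:R) (m - l) by rewrite -pochD subnKC.
rewrite (poch_neg_nat l j) -bin_ffact natrM; field.
by rewrite !poch_a_neq0 !fact_neq0.
Qed.

(* G is a left inverse of H: entry (j,m) of G *m H equals
   (-1)^j (a)_m/(a)_j * A_m (l |-> C(l,j)) = (-1)^(j+m) (a)_m/(a)_j [m = j]. *)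
Lemma hankel_poch_invK n : hankel_poch_inv n *m hankel_poch n = 1%:M.
Proof.
apply/matrixP => j m; rewrite !mxE.
under eq_bigr => k _ do rewrite !mxE mulr_suml.
rewrite exchange_big /=.
under eq_bigr => l _ do under eq_bigr => k _ do rewrite inv_term_mul_hankel.
under eq_bigr => l _ do rewrite -mulr_sumr
  (altsum_widen (fun k => poch (a + k%:R) m)) // altsum_poch inv_row_coeff.
rewrite -mulr_sumr (altsum_widen (fun l => 'C(l, j)%:R)) // altsum_bin.
have [<- | ne_jm] := eqVneq j m; last first.
  by rewrite ifF ?mulr0 //; apply/negbTE; rewrite eq_sym.
by rewrite ifT // mulfK // -exprD -signr_odd addnn odd_double.
Qed.

End HankelPochhammerInverse.

(* For alpha > -1 all (alpha+1)_k are positive; G *m H = 1 then gives both claims. *)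
Theorem mainTheorem2 (R : realFieldType) (alpha : R) (n : nat) (halpha : -1 < alpha) :
  let H : 'M[R]_n.+1 := \matrix_(j < n.+1, k < n.+1) poch (alpha + 1) (j + k)%N in
  H \in unitmx /\
  invmx H =
    \matrix_(j < n.+1, k < n.+1)
      \sum_(l < n.+1)
        (poch (alpha + 1) l * poch (- (l%:R)) j * poch (- (l%:R)) k) /
        ((l`!)%:R * poch (alpha + 1) j * poch (alpha + 1) k * (j`!)%:R * (k`!)%:R).
Proof.
move=> H.
have poch_neq0 k : poch (alpha + 1) k != 0.
  by rewrite gt_eqF // poch_gt0 // -ltrBlDr sub0r.
have GH := hankel_poch_invK poch_neq0 n.
have [_ H_unit] := mulmx1_unit GH.
by split; last by rewrite -[LHS]mul1mx -GH mulmxK.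
Qed.
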